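(* Suppose $x\in\mathrm{Fix}_n(\sigma)^\circ$ for some integer $n\ge1$, and that $n$ is minimal with this property. If $f\in C(X)$, $m\in\mathbb{Z}$, $\mathrm{supp}(f)\subset\mathrm{Fix}_m(\sigma)$ and $n\nmid m$, then $f(x)=0$.
   Context: $X$ is a non-empty compact Hausdorff space, $\sigma:X\to X$ a homeomorphism, $C(X)$ the continuous complex functions on $X$. For $m\in\mathbb{Z}$, $\mathrm{Fix}_m(\sigma)=\{x\in X:\sigma^mx=x\}$; superscript $\circ$ denotes interior in $X$; $\mathrm{supp}(f)$ is the closure of $\{x:f(x)\ne0\}$. *)

From mathcomp Require Import all_boot all_order all_algebra.
From mathcomp Require Import all_classical all_reals all_analysis.
From mathcomp Require Export complex.
Set Implicit Arguments. Unset Strict Implicit. Unset Printing Implicit Defensive.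
Import Order.TTheory GRing.Theory Num.Theory.
Local Open Scope classical_set_scope.
Local Open Scope ring_scope.

(* Integer iterate sigma^m of a homeomorphism sigma with inverse sigmainv:
   sigma^n for m = n >= 0, and sigmainv^(n+1) for m = -(n+1). *)
Definition iterz (X : Type) (sigma sigmainv : X -> X) (m : int) : X -> X :=
  match m with
  | Posz n => iter n sigma
  | Negz n => iter n.+1 sigmainv
  end.

Definition Fix (X : Type) (sigma sigmainv : X -> X) (m : int) : set X :=
  [set x | iterz sigma sigmainv m x = x].

Definition supp (X : topologicalType) (R : realType) (f : X -> (R[i])^o) : set X :=
  closure [set x | f x != 0].

From mathcomp Require Import all_boot all_order all_algebra.
From mathcomp Require Import all_classical all_reals all_analysis.
From mathcomp Require Import complex.
Set Implicit Arguments. Unset Strict Implicit.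
Import Order.TTheory GRing.Theory Num.Theory.
Local Open Scope classical_set_scope.
Local Open Scope ring_scope.

(* If f x <> 0 then x lies in the open set {f <> 0} ⊆ supp f ⊆ Fix_m, so
   x ∈ Fix_m° ∩ Fix_n° ⊆ Fix_d° with d = gcd(n, |m|), because points of
   period n and |m| have period d (Bezout).  Since d divides n and is
   positive, minimality of n forces d = n, i.e. n divides m. *)

Section IterFix.
Variables (T : Type) (g : T -> T).

Lemma iter_fixM (k : nat) {a : nat} {y : T} :
  iter a g y = y -> iter (k * a) g y = y.
Proof. by move=> ha; elim: k => [|k IH] //=; rewrite mulSn iterD IH ha. Qed.

Lemma iter_fix_gcdn (a b : nat) (y : T) : (0 < a)%N ->
  iter a g y = y -> iter b g y = y -> iter (gcdn a b) g y = y.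
Proof.
move=> a_gt0 ha hb; case: (egcdnP b a_gt0) => ka kb Bezout _.
have := iter_fixM ka ha.
by rewrite Bezout addnC iterD (iter_fixM kb hb).
Qed.

Lemma iter_fix_can (h : T -> T) (k : nat) (y : T) :
  cancel h g -> iter k h y = y -> iter k g y = y.
Proof.
move=> hK fixy; rewrite -{1}fixy {fixy}; elim: k => [|k IH] //.
by rewrite iterSr iterS hK.
Qed.

End IterFix.

Section FixedPoints.
Variables (X : Type) (sigma sigmainv : X -> X).
Hypothesis sigmainvK : cancel sigmainv sigma.

Lemma Fix_absz (m : int) :
  Fix sigma sigmainv m `<=` Fix sigma sigmainv `|m|%N.
Proof. by case: m => [k|k] y //; apply: iter_fix_can. Qed.

Lemma Fix_gcdn (a b : nat) : (0 < a)%N ->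
  Fix sigma sigmainv a `&` Fix sigma sigmainv b
  `<=` Fix sigma sigmainv (gcdn a b).
Proof. by move=> a_gt0 y [ha hb]; apply: iter_fix_gcdn. Qed.

End FixedPoints.

Lemma interior_supp (X : topologicalType) (R : realType)
    (f : X -> (R[i])^o) (x : X) :
  {for x, continuous f} -> f x != 0 -> (supp f)° x.
Proof.
move=> fx fx_neq0; rewrite /interior.
apply: filterS (cvgr_neq0 (f x) fx fx_neq0) => y fy_neq0.
exact: subset_closure.
Qed.

Theorem lemma2p1 (R : realType) (X : topologicalType)
  (hX_compact : compact [set: X]) (hX_hausdorff : hausdorff_space X)
  (sigma sigmainv : X -> X)
  (hsigma_cont : continuous sigma) (hsigmainv_cont : continuous sigmainv)
  (hsigmaK : cancel sigma sigmainv) (hsigmainvK : cancel sigmainv sigma)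
  (x : X) (n : nat) (hn : (0 < n)%N)
  (hx : (Fix sigma sigmainv n%:Z)° x)
  (hmin : forall k : nat, (0 < k < n)%N -> ~ (Fix sigma sigmainv k%:Z)° x)
  (f : X -> (R[i])^o) (hf : continuous f) (m : int)
  (hsupp : supp f `<=` Fix sigma sigmainv m)
  (hndiv : ~~ (n%:Z %| m)%Z) :
  f x = 0.
Proof.
apply/eqP; apply: contraNT hndiv => fx_neq0.
set d := gcdn n `|m|%N.
have hxd : (Fix sigma sigmainv d)° x.
  apply: (interiorS (Fix_gcdn (b := `|m|%N) hn)).
  rewrite interiorI; split=> //.
  apply: (interiorS (Fix_absz hsigmainvK (m := m))).
  exact: (interiorS hsupp) (interior_supp (hf x) fx_neq0).
have d_gt0 : (0 < d)%N by rewrite gcdn_gt0 hn.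
have d_eq_n : d = n.
  apply/eqP; rewrite eqn_leq dvdn_leq ?dvdn_gcdl //=.
  by rewrite leqNgt; apply/negP => d_lt_n; apply: (hmin d) hxd; rewrite d_gt0.
by rewrite dvdzE /= -d_eq_n dvdn_gcdr.
Qed.
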